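(* Let $j\ge6$ and let $H=(1,4,a,\dots,a,4,1)$ be a sequence of nonnegative integers of socle degree $j$, symmetric about $j/2$, with $a\le6$. Then $H$ is a Gorenstein sequence for $R=K[w,x,y,z]$ if and only if $\Delta H_{\le j/2}$ is an $O$-sequence, equivalently if and only if $\Delta H_{\le j/2}$ is nonincreasing from the first index at which it fails to increase. The values $a=2$ and $a=3$ cannot occur.
   Context: $K$ algebraically closed. A Gorenstein sequence of socle degree $j$ is the Hilbert function of a standard graded Artinian Gorenstein quotient of $R$ with top nonzero degree $j$. $\Delta H_i=h_i-h_{i-1}$ ($h_{-1}=0$), $\Delta H_{\le j/2}=(\Delta H_i)_{0\le i\le j/2}$. For $c,d>0$ write $c=\sum_{i=1}^d\binom{k(i)}{i}$ with $k(d)>\dots>k(1)\ge0$ and $c^{(d)}=\sum_{i=1}^d\binom{k(i)+1}{i+1}$, $0^{(d)}=0$; an $O$-sequence is $(1,t_1,\dots)$ with $t_i\ge0$ and $t_{d+1}\le t_d^{(d)}$ for all $d\ge1$. *)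

From mathcomp Require Import all_boot all_order all_algebra.
From mathcomp Require Import mpoly.
Set Implicit Arguments. Unset Strict Implicit. Unset Printing Implicit Defensive.
Import GRing.Theory.
Local Open Scope ring_scope.

(* R = K[w,x,y,z] is {mpoly K[4]}, the variables being 'X_0,...,'X_3.
   An ideal is represented as a predicate (Prop) on R. *)

Section Gor.
Variable K : closedFieldType.
Local Notation R := {mpoly K[4]}.

Definition is_ideal (I : R -> Prop) : Prop :=
  [/\ I 0,
      (forall p q, I p -> I q -> I (p + q)) &
      (forall r p, I p -> I (r * p))].

Definition is_homogeneous_ideal (I : R -> Prop) : Prop :=
  is_ideal I /\ (forall p d, I p -> I (pihomog mdeg d p)).

(* (R/I)_i has dimension n : there are n forms of degree i whose classes form
   a K-basis of (R/I)_i = R_i / I_i. *)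
Definition hilb_val (I : R -> Prop) (i n : nat) : Prop :=
  exists s : 'I_n -> R,
    [/\ (forall k, s k \is i.-homog),
        (forall c : 'I_n -> K, I (\sum_(k < n) c k *: s k) -> forall k, c k = 0) &
        (forall p : R, p \is i.-homog ->
           exists c : 'I_n -> K, I (p - \sum_(k < n) c k *: s k))].

(* R/I is Gorenstein: its socle 0 :_{R/I} (w,x,y,z) is one-dimensional. *)
Definition gorenstein_quot (I : R -> Prop) : Prop :=
  exists s : R,
    [/\ ~ I s,
        (forall v : 'I_4, I ('X_v * s)) &
        (forall f : R, (forall v : 'I_4, I ('X_v * f)) ->
           exists c : K, I (f - c *: s))].

Definition gorenstein_sequence (h : nat -> nat) (j : nat) : Prop :=
  exists I : R -> Prop,
    [/\ is_homogeneous_ideal I,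
        gorenstein_quot I,
        (forall i, (i <= j)%N -> hilb_val I i (h i)),
        h j <> 0%N &
        (forall i, (j < i)%N -> hilb_val I i 0)].
End Gor.

Definition Hseq (j a : nat) (i : nat) : nat :=
  if i == 0%N then 1%N
  else if i == 1%N then 4%N
  else if i == j.-1 then 4%N
  else if i == j then 1%N
  else if (i < j)%N then a else 0%N.

Definition DeltaH (h : nat -> nat) (i : nat) : int :=
  (h i)%:Z - (if i is i'.+1 then (h i')%:Z else 0).

Definition DeltaH_half (h : nat -> nat) (j : nat) : seq int :=
  [seq DeltaH h i | i <- iota 0 (j./2).+1].

Definition macaulay_expansion (c d : nat) (k : nat -> nat) : Prop :=
  (forall i, (1 <= i)%N -> (i < d)%N -> (k i < k i.+1)%N) /\
  c = (\sum_(1 <= i < d.+1) 'C(k i, i))%N.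

(* v = c^{(d)} (the expansion is unique, so this is functional in c, d) *)
Definition macaulay_upper (c d v : nat) : Prop :=
  if c == 0%N then v = 0%N
  else exists k, macaulay_expansion c d k /\
                 v = (\sum_(1 <= i < d.+1) 'C((k i).+1, i.+1))%N.

Definition O_sequence (t : seq int) : Prop :=
  [/\ t`_0 = 1,
      (forall i, (i < size t)%N -> 0 <= t`_i) &
      (forall d, (1 <= d)%N -> (d.+1 < size t)%N ->
         exists v, macaulay_upper (absz (nth (0:int) t d)) d v /\ (absz (nth (0:int) t d.+1) <= v)%N)].

Definition fails_to_increase (t : seq int) (i : nat) : bool :=
  (1 <= i)%N && (i < size t)%N && (t`_i <= t`_i.-1).

Definition noninc_after_first_failure (t : seq int) : Prop :=
  forall i0, fails_to_increase t i0 ->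
    (forall i, (1 <= i < i0)%N -> ~~ fails_to_increase t i) ->
    forall i, (i0 <= i)%N -> (i.+1 < size t)%N -> t`_i.+1 <= t`_i.

(* Here Delta H_{<= j/2} = (1, 3, a - 4, 0, ..., 0), so both combinatorial
   conditions just say a >= 4.

   Necessity is Macaulay's bound.  Fix a monomial order; the monomials that are
   not leading monomials of elements of I form an order ideal whose members of
   degree d are a basis of (R/I)_d.  An order ideal with at most d monomials in
   degree d > 0 has no more monomials in degree d + 1, so h_{j-2} = a <= 3 would
   force 4 = h_{j-1} <= a.

   Sufficiency: for 4 <= a <= 6 write a = p + q + 2 with p, q in {1, 2}.  The
   annihilator of the dual form F = w^(j-p) x^p + y^(j-q) z^q consists of the
   polynomials vanishing on the proper divisors of both monomials and having
   opposite coefficients at them; counting those divisors degree by degree gives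
   H, and the socle of R/Ann(F) is spanned by w^(j-p) x^p because the two
   monomials share no variable. *)

From mathcomp Require Import all_boot all_order all_algebra.
From mathcomp Require Import mpoly.
From mathcomp Require Import zify ring.
From Stdlib Require Import Classical.
From Stdlib Require ClassicalDescription.

Set Implicit Arguments.
Unset Strict Implicit.
Unset Printing Implicit Defensive.

Import Order.Theory GRing.Theory Num.Theory.
Local Open Scope ring_scope.

Lemma Hseq_middle j a i : (1 < i < j.-1)%N -> Hseq j a i = a.
Proof.
move=> hi; rewrite /Hseq; do 4 (case: eqP => [?|_]; first by lia).
by case: ltnP => //; lia.
Qed.

Lemma half_bounds j : (6 <= j)%N -> (3 <= j./2 <= j - 3)%N.
Proof.
move=> hj; have := odd_double_half j; have : (3 <= 6./2)%N by [].
move/leq_trans/(_ (half_leq hj)); lia.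
Qed.

Lemma DeltaH_half_Hseq j a : (6 <= j)%N ->
  DeltaH_half (Hseq j a) j = [:: 1, 3, a%:Z - 4 & nseq (j./2 - 2) 0].
Proof.
move=> hj; have hj2 := half_bounds hj.
apply: (@eq_from_nth _ 0); first by rewrite size_map size_iota /= size_nseq; lia.
rewrite size_map size_iota => i hi.
rewrite (nth_map 0%N) ?size_iota // nth_iota // add0n /DeltaH.
case: i hi => [|[|[|i]]] hi //=; first by rewrite Hseq_middle //; lia.
by rewrite nth_nseq if_same !Hseq_middle ?subrr //; lia.
Qed.

Lemma macaulay_upper1 c : macaulay_upper c 1 'C(c.+1, 2).
Proof.
rewrite /macaulay_upper; case: eqP => [->//|_].
exists (fun=> c); rewrite /macaulay_expansion !big_nat1 bin1.
by split; first split=> // i; lia.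
Qed.

Lemma macaulay_upper_small c d : (c <= d)%N -> macaulay_upper c d c.
Proof.
move=> hcd; rewrite /macaulay_upper; case: eqP => // c0.
pose k i := if (d - c < i)%N then i else i.-1.
have sum_ones (F : nat -> nat) :
    (forall i, (0 < i <= d - c)%N -> F i = 0%N) -> (forall i, (d - c < i)%N -> F i = 1%N) ->
    (\sum_(1 <= i < d.+1) F i)%N = c.
  move=> F0 F1; rewrite (@big_cat_nat _ _ _ (d - c).+1) /=; try lia.
  rewrite big_nat_cond big1 ?add0n; last by move=> i /andP[/andP[? ?] _]; apply: F0; lia.
  rewrite big_nat_cond (eq_bigr (fun=> 1%N)) -?big_nat_cond ?sum_nat_const_nat ?muln1; first lia.
  by move=> i /andP[/andP[? _] _]; apply: F1.
exists k; split; first split.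
- by move=> i h1 h2; rewrite /k; case: (ltnP _ i); case: (ltnP _ i.+1); lia.
all: rewrite sum_ones // => i hi; rewrite /k.
all: by case: (ltnP _ i) => ?; rewrite ?binn ?bin_small //; lia.
Qed.

Lemma O_sequence_1_3 (c : int) n : c <= 2 ->
  O_sequence [:: 1, 3, c & nseq n 0] <-> 0 <= c.
Proof.
have nseq0 i : nth (0 : int) (nseq n 0) i = 0 by rewrite nth_nseq if_same.
move=> c2; split; first by case=> _ /(_ 2%N isT).
move=> c0; split => //.
  by move=> [|[|[|i]]] //= _; rewrite nseq0.
move=> [|[|[|d]]] //= _ hd; rewrite ?nseq0.
- by exists 6%N; split; [exact: (macaulay_upper1 3) | lia].
- by exists `|c|%N; split; [apply: macaulay_upper_small; lia | lia].
- by exists 0%N; split.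
Qed.

Lemma noninc_after_first_failure_1_3 (c : int) n : (0 < n)%N ->
  noninc_after_first_failure [:: 1, 3, c & nseq n 0] <-> 0 <= c.
Proof.
have nseq0 i : nth (0 : int) (nseq n 0) i = 0 by rewrite nth_nseq if_same.
rewrite /noninc_after_first_failure => n0; split.
  move=> noninc; case: (lerP c 3) => [c3|]; last by lia.
  have fail2 : fails_to_increase [:: 1, 3, c & nseq n 0] 2.
    by rewrite /fails_to_increase /=.
  have first2 i : (1 <= i < 2)%N -> ~~ fails_to_increase [:: 1, 3, c & nseq n 0] i.
    by move=> hi; have -> : i = 1%N by lia.
  by have := noninc 2%N fail2 first2 2%N (leqnn 2); rewrite /= nseq0; apply; rewrite size_nseq; lia.
move=> c0 i0 /andP[/andP[hi0 _] fail] _ i hi _.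
case: i0 hi0 fail hi => [|[|i0]] //= _ _; case: i => [|[|[|i]]] //=; rewrite ?nseq0 //; lia.
Qed.

Lemma exists_nonzero_left_kernel (F : fieldType) m n (M : 'M[F]_(m, n)) :
  (n < m)%N -> exists2 u : 'rV_m, u != 0 & u *m M = 0.
Proof.
move=> nm; have : kermx M != 0.
  by rewrite kermx_eq0 /row_free; apply: contraTneq nm => <-; rewrite -leqNgt rank_leq_col.
by case/rowV0Pn=> u /sub_kermxP uM u0; exists u.
Qed.

Section Ideal.
Variable K : closedFieldType.
Local Notation R := {mpoly K[4]}.
Variable I : R -> Prop.
Hypothesis idealI : is_ideal I.

Lemma ideal0 : I 0. Proof. by case: idealI. Qed.
Lemma idealD p q : I p -> I q -> I (p + q). Proof. by case: idealI => _ + _; apply. Qed.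
Lemma idealM r p : I p -> I (r * p). Proof. by case: idealI => _ _; apply. Qed.
Lemma idealZ c p : I p -> I (c *: p). Proof. by rewrite -mul_mpolyC; apply: idealM. Qed.
Lemma ideal_sum n (F : 'I_n -> R) : (forall k, I (F k)) -> I (\sum_(k < n) F k).
Proof. by move=> IF; apply: (big_ind I) => //; [apply: ideal0 | apply: idealD]. Qed.

Lemma indep_mod_leq_span n m (s : 'I_n -> R) (t : 'I_m -> R) :
  (forall k, exists c : 'I_n -> K, I (t k - \sum_(l < n) c l *: s l)) ->
  (forall c : 'I_m -> K, I (\sum_(k < m) c k *: t k) -> forall k, c k = 0) ->
  (m <= n)%N.
Proof.
move=> /fin_all_exists[C tC] indep_t; rewrite leqNgt; apply/negP => nm.
have [u u0 uM] := exists_nonzero_left_kernel (\matrix_(k, l) C k l) nm.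
suff Iu : I (\sum_k u 0 k *: t k).
  by case/eqP: u0; apply/rowP => k; rewrite mxE; exact: (indep_t (fun k => u 0 k) Iu).
have -> : \sum_k u 0 k *: t k
    = \sum_k u 0 k *: (t k - \sum_l C k l *: s l) + \sum_l (u *m \matrix_(k, l) C k l) 0 l *: s l.
  have -> : \sum_l (u *m \matrix_(k, l) C k l) 0 l *: s l = \sum_k u 0 k *: \sum_l C k l *: s l.
    under eq_bigr => l _ do rewrite !mxE scaler_suml.
    rewrite exchange_big; apply: eq_bigr => k _; rewrite scaler_sumr.
    by apply: eq_bigr => l _; rewrite mxE scalerA.
  by rewrite -big_split; apply: eq_bigr => k _; rewrite /= scalerBr subrK.
rewrite uM; under [X in _ + X]eq_bigr => l _ do rewrite mxE scale0r.
rewrite big1_eq addr0; apply: ideal_sum => k; exact/idealZ/tC.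
Qed.
End Ideal.

Section Coefficients.
Variables (n : nat) (R : nzRingType).
Implicit Types (p q : {mpoly R[n]}) (m u x : 'X_{1..n}) (ms : seq 'X_{1..n}).

Lemma mpolyX_neq0 u : 'X_[u] != 0 :> {mpoly R[n]}.
Proof. by apply/eqP => /(congr1 (mcoeff u))/eqP; rewrite mcoeffX eqxx mcoeff0 oner_eq0. Qed.

Lemma mcoeff_pihomog d p x :
  (pihomog mdeg d p)@_x = if mdeg x == d then p@_x else 0.
Proof.
rewrite pihomogE raddf_sum /= big_mkcond /=.
under eq_bigr => m _ do rewrite mcoeffZ mcoeffX.
case: (boolP (x \in msupp p)) => hx.
  rewrite (bigD1_seq x) ?msupp_uniq //= eqxx mulr1 big1 ?addr0 //.
  by move=> m hm; case: ifP => // _; rewrite (negbTE hm) mulr0.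
rewrite big1_seq ?memN_msupp_eq0 ?if_same // => m /= hm.
by case: ifP => // _; case: (eqVneq m x) => [mx|_]; [rewrite -mx hm in hx | rewrite mulr0].
Qed.

Lemma mcoeffXM u p m :
  ('X_[u] * p)@_m = if (u <= m)%MM then p@_(m - u) else 0.
Proof.
rewrite -commr_mpolyX; case: ifP => um; first by rewrite -{1}(submK um) addmC mcoeffMX.
apply/memN_msupp_eq0; rewrite (perm_mem (msuppMX p u)).
by apply/mapP => -[m' _ mE]; rewrite mE lem_addr in um.
Qed.

Lemma mcoeff_sumX ms (c : 'I_(size ms) -> R) x :
  (\sum_(k < size ms) c k *: 'X_[nth 0%MM ms k])@_x =
  \sum_(k < size ms) c k * (nth 0%MM ms k == x)%:R.
Proof. by rewrite raddf_sum /=; apply: eq_bigr => k _; rewrite mcoeffZ mcoeffX. Qed.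

Lemma mcoeff_sumX_nth ms (c : 'I_(size ms) -> R) (k0 : 'I_(size ms)) : uniq ms ->
  (\sum_(k < size ms) c k *: 'X_[nth 0%MM ms k])@_(nth 0%MM ms k0) = c k0.
Proof.
move=> ms_uniq; rewrite mcoeff_sumX (bigD1 k0) //= eqxx mulr1 big1 ?addr0 // => k k0k.
by rewrite nth_uniq // -[(k == k0 :> nat)]/(k == k0) (negbTE k0k) mulr0.
Qed.

Lemma mcoeff_sumX_mem ms (f : 'X_{1..n} -> R) x : uniq ms -> x \in ms ->
  (\sum_(k < size ms) f (nth 0%MM ms k) *: 'X_[nth 0%MM ms k])@_x = f x.
Proof.
move=> ms_uniq xms; pose kx := Ordinal (etrans (index_mem x ms) xms).
by have := mcoeff_sumX_nth (fun k => f (nth 0%MM ms k)) kx ms_uniq; rewrite /= nth_index.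
Qed.

Lemma mcoeff_sumX_notin ms (c : 'I_(size ms) -> R) x : x \notin ms ->
  (\sum_(k < size ms) c k *: 'X_[nth 0%MM ms k])@_x = 0.
Proof.
move=> xms; rewrite mcoeff_sumX big1 // => k _.
by case: (eqVneq (nth 0%MM ms k) x) => [kx|_]; [rewrite -kx mem_nth in xms | rewrite mulr0].
Qed.

Lemma mpoly_supp_sumX ms p : uniq ms -> (forall x, p@_x != 0 -> x \in ms) ->
  p = \sum_(k < size ms) p@_(nth 0%MM ms k) *: 'X_[nth 0%MM ms k].
Proof.
move=> ms_uniq supp_p; apply/mpolyP => x; case: (boolP (x \in ms)) => xms.
  by rewrite (mcoeff_sumX_mem (fun x => p@_x)).
by rewrite mcoeff_sumX_notin //; apply/eqP; apply: contraNT xms; apply: supp_p.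
Qed.

Lemma mlead_lt_coef0 p m : p != 0 -> p@_m = 0 ->
  (forall x, p@_x != 0 -> (x <= m)%O) -> (mlead p < m)%O.
Proof.
move=> p0 pm supp_p; rewrite lt_neqAle supp_p ?mleadc_eq0 // andbT.
by apply: contraNneq p0 => lead_m; rewrite -mleadc_eq0; apply/eqP; rewrite -pm -lead_m.
Qed.
End Coefficients.

Section StandardMonomials.
Variable K : closedFieldType.
Local Notation R := {mpoly K[4]}.
Variable I : R -> Prop.
Hypothesis idealI : is_ideal I.

Definition standard_mon (m : 'X_{1..4}) : Prop :=
  ~ exists f, [/\ I f, f != 0 & mlead f = m].

Definition standard_supp (q : R) : Prop := forall x, q@_x != 0 -> standard_mon x.

Lemma standard_mon_dvd u m : standard_mon (u + m)%MM -> standard_mon m.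
Proof.
move=> std_um [f [If f0 lead_f]]; apply: std_um; exists ('X_[u] * f); split.
- exact: idealM.
- by rewrite mulf_neq0 ?mpolyX_neq0.
- by rewrite mleadM ?mpolyX_neq0 // mleadXm lead_f.
Qed.

Lemma standard_suppD p q : standard_supp p -> standard_supp q -> standard_supp (p + q).
Proof.
move=> Sp Sq x; rewrite mcoeffD; case: (eqVneq p@_x 0) => [->|/Sp //].
by rewrite add0r; apply: Sq.
Qed.

(* One step of the division algorithm: either the leading term of [p] is a
   standard term, which is moved to the remainder [z], or it is cancelled by a
   multiple [r] of an element of [I] with the same leading monomial. *)
Lemma lead_reduction p : p != 0 -> exists z r,
  [/\ standard_supp z, I r & (p - z - r == 0) || (mlead (p - z - r) < mlead p)%O].
Proof.
move=> p0; case: (classic (standard_mon (mlead p))) => [std_p | /NNPP[f [If f0 lead_f]]].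
  exists (mleadc p *: 'X_[mlead p]), 0; split.
  - move=> x; rewrite mcoeffZ mcoeffX.
    by case: (eqVneq (mlead p) x) => [<- //|_]; rewrite mulr0 eqxx.
  - exact: ideal0.
  by rewrite subr0; case: (eqVneq (p - _ *: _) 0) => //= ?; apply: ltm_mleadD.
have fm0 : f@_(mlead p) != 0 by rewrite -lead_f mleadc_eq0.
exists 0, ((p@_(mlead p) / f@_(mlead p)) *: f); split.
- by move=> x; rewrite mcoeff0 eqxx.
- exact: idealZ.
rewrite subr0; case: (eqVneq (p - _ *: f) 0) => //= q0; apply: mlead_lt_coef0 => // [|x].
  by rewrite mcoeffB mcoeffZ divfK // subrr.
rewrite mcoeffB mcoeffZ; case: (eqVneq p@_x 0) => [px0|px0 _]; last first.
  by apply: msupp_le_mlead; rewrite mcoeff_msupp.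
rewrite px0 sub0r oppr_eq0 mulf_eq0 negb_or => /andP[_ fx0].
by rewrite -lead_f; apply: msupp_le_mlead; rewrite mcoeff_msupp.
Qed.

Lemma standard_normal_form p : exists2 q, standard_supp q & I (p - q).
Proof.
elim/mleadrect: p => p IH; case: (eqVneq p 0) => [->|p0].
  by exists 0; [move=> x; rewrite mcoeff0 eqxx | rewrite subr0; apply: ideal0].
have [z [r [Sz Ir]]] := lead_reduction p0.
case: (eqVneq (p - z - r) 0) => [/eqP|_ /= /IH[q Sq Iq]].
  by rewrite subr_eq add0r => /eqP pzr _; exists z; rewrite ?pzr.
exists (q + z); first exact: standard_suppD.
have -> : p - (q + z) = (p - z - r - q) + r by ring.
exact: idealD.
Qed.

Lemma standard_mon_indep (ms : seq 'X_{1..4}) :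
  uniq ms -> {in ms, forall x, standard_mon x} ->
  forall c : 'I_(size ms) -> K,
  I (\sum_(k < size ms) c k *: 'X_[nth 0%MM ms k]) -> forall k, c k = 0.
Proof.
move=> ms_uniq std_ms c Ic k; set p := \sum_(k < _) _ in Ic.
case: (eqVneq p 0) => [p0|p0]; first by rewrite -(mcoeff_sumX_nth c k ms_uniq) -/p p0 mcoeff0.
have lead_ms : mlead p \in ms.
  by apply: contraNT p0 => /(mcoeff_sumX_notin c)/eqP; rewrite -/p mleadc_eq0.
by case: (std_ms _ lead_ms); exists p.
Qed.

Lemma standard_mon_span d (ms : seq 'X_{1..4}) :
  (forall p e, I p -> I (pihomog mdeg e p)) -> uniq ms ->
  (forall x, mdeg x = d -> standard_mon x -> x \in ms) ->
  forall p : R, p \is d.-homog ->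
  exists c : 'I_(size ms) -> K, I (p - \sum_(k < size ms) c k *: 'X_[nth 0%MM ms k]).
Proof.
move=> homogI ms_uniq ms_std p p_homog; have [q Sq Iq] := standard_normal_form p.
set r := pihomog mdeg d q.
have r_sum : r = \sum_(k < size ms) r@_(nth 0%MM ms k) *: 'X_[nth 0%MM ms k].
  apply: mpoly_supp_sumX => // x; rewrite mcoeff_pihomog.
  case: (mdeg x =P d) => [dx qx|_]; last by rewrite eqxx.
  by apply: ms_std => //; apply: Sq.
exists (fun k => r@_(nth 0%MM ms k)); rewrite -r_sum.
by have := homogI _ d Iq; rewrite pihomogB pihomog_dE.
Qed.
End StandardMonomials.

Fixpoint compositions (n k : nat) : seq (seq nat) :=
  if n is n'.+1 then
    flatten [seq [seq e :: u | u <- compositions n' (k - e)] | e <- iota 0 k.+1]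
  else if k == 0%N then [:: [::]] else [::].

Lemma compositionsS n k : compositions n.+1 k =
  flatten [seq [seq e :: u | u <- compositions n (k - e)] | e <- iota 0 k.+1].
Proof. by []. Qed.

Lemma mem_compositions n k s :
  (s \in compositions n k) = (size s == n) && (sumn s == k).
Proof.
elim: n k s => [|n IH] k s; first by case: s; case: k.
apply/flattenP/idP => [[_ /mapP[e + ->] /mapP[u + ->]]|].
  by rewrite mem_iota IH /= => ? /andP[/eqP-> /eqP ?]; rewrite eqxx; apply/eqP; lia.
case: s => [|e u] // /andP[/eqP[su] /eqP]; rewrite [sumn _]/= => eu.
exists [seq e :: u' | u' <- compositions n (k - e)].
  by apply: (map_f (fun e => [seq e :: u' | u' <- compositions n (k - e)])); rewrite mem_iota; lia.
by apply: map_f; rewrite IH su eqxx /=; apply/eqP; lia.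
Qed.

Lemma flatten_cons_uniq (G : nat -> seq (seq nat)) lo len :
  (forall e, uniq (G e)) -> uniq (flatten [seq [seq e :: u | u <- G e] | e <- iota lo len]).
Proof.
move=> G_uniq; elim: len lo => [|len IH] lo //=.
rewrite cat_uniq IH andbT map_inj_uniq ?G_uniq //; last by move=> x y [].
apply/hasPn => s /flattenP[l /mapP[e]]; rewrite mem_iota => /andP[lo_e _] -> /mapP[u _ ->].
by apply/mapP => -[v _ [elo _]]; move: lo_e; rewrite elo ltnn.
Qed.

Lemma compositions_uniq n k : uniq (compositions n k).
Proof. by elim: n k => [|n IH] k; [case: k | apply: flatten_cons_uniq]. Qed.

Lemma count_compositionsS (P : pred (seq nat)) n k :
  count P (compositions n.+1 k) =
  (\sum_(0 <= e < k.+1) count (fun u => P (e :: u)) (compositions n (k - e)))%N.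
Proof.
rewrite compositionsS count_flatten -map_comp /index_iota subn0 sumnE big_map.
by apply: eq_bigr => e _ /=; rewrite count_map.
Qed.

Definition decr_nth (s : seq nat) i := set_nth 0%N s i (nth 0%N s i).-1.

Definition down_closed (P : pred (seq nat)) :=
  forall s i, P s -> (0 < nth 0%N s i)%N -> P (decr_nth s i).

Lemma down_closed_cons P e : down_closed P -> down_closed (fun u => P (e :: u)).
Proof. by move=> P_dc u i Pu ui; apply: (P_dc (e :: u) i.+1). Qed.

Lemma down_closed_head P e u : down_closed P -> P (e.+1 :: u) -> P (e :: u).
Proof. by move=> P_dc Peu; apply: (P_dc (e.+1 :: u) 0%N). Qed.

Lemma leq_sum_nat_pos (b : nat -> nat) m :
  (forall e, e < m -> 0 < b e)%N -> (m <= \sum_(0 <= e < m) b e)%N.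
Proof.
move=> b_pos; rewrite -[X in (X <= _)%N]muln1 -[X in (X * _)%N]subn0 -sum_nat_const_nat.
by rewrite big_nat_cond [X in (_ <= X)%N]big_nat_cond; apply: leq_sum => e /andP[/andP[_ /b_pos]].
Qed.

(* The inductive step of [count_compositions_succ_le]: [b e] and [c e] count the
   members of an order ideal in degrees [k] and [k + 1] whose first exponent is [e]. *)
Lemma sum_slices_le k (b c : nat -> nat) :
  (\sum_(0 <= e < k.+1) b e <= k)%N ->
  (forall e, 0 < e <= k.+1 -> c e <= b e.-1)%N ->
  (forall e, e < k -> b e <= k - e -> c e <= b e)%N ->
  (forall e, e <= k -> b e = 0 -> c e = 0)%N ->
  (\sum_(0 <= e < k.+2) c e <= \sum_(0 <= e < k.+1) b e)%N.
Proof.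
move=> sum_b c_shift c_le c0.
have [g [gk bg b_pos]] : exists g, [/\ g <= k, b g = 0 & forall e, e < g -> 0 < b e]%N.
  have [e ek be0] : exists2 e, (e <= k)%N & b e = 0%N.
    apply: NNPP => no_zero.
    suff : (k.+1 <= \sum_(0 <= e < k.+1) b e)%N by rewrite leqNgt ltnS sum_b.
    by apply: leq_sum_nat_pos => e ek; rewrite lt0n; apply/eqP => be0; apply: no_zero; exists e.
  have ex_e : exists e, (e <= k)%N && (b e == 0%N) by exists e; rewrite ek be0.
  case: (ex_minnP ex_e) => g /andP[gk /eqP bg] g_min; exists g; split=> // e' e'g.
  by rewrite lt0n; apply/negP => /eqP be'; have := g_min e'; rewrite be' eqxx andbT; lia.
have b_small e : (e < g -> b e <= k - e)%N.
  move=> eg; have := leq_sum_nat_pos (m := e) (b := b) (fun e' e'e => b_pos e' (ltn_trans e'e eg)).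
  have : (\sum_(0 <= e' < e.+1) b e' <= k)%N.
    by apply: leq_trans sum_b; rewrite (big_cat_nat _ (_ : e.+1 <= k.+1)%N) ?leq_addr //=; lia.
  rewrite big_nat_recr //=; lia.
rewrite (big_cat_nat _ (_ : g <= k.+2)%N) 1?(big_cat_nat _ (_ : g <= k.+1)%N) //=; try lia.
apply: leq_add.
  rewrite big_nat_cond [X in (_ <= X)%N]big_nat_cond.
  by apply: leq_sum => e /andP[/andP[_ eg] _]; apply: c_le; [lia | apply: b_small].
rewrite big_ltn ?c0 // ?add0n; last by lia.
rewrite big_add1 /= big_nat_cond [X in (_ <= X)%N]big_nat_cond.
by apply: leq_sum => e /andP[/andP[ge ek] _]; apply: (c_shift e.+1); lia.
Qed.

Lemma count_compositions_eq0S n P k : down_closed P ->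
  count P (compositions n k) = 0%N -> count P (compositions n k.+1) = 0%N.
Proof.
elim: n P k => [//|m IH] P k P_dc.
rewrite !count_compositionsS => /eqP; rewrite sum_nat_seq_eq0 => /allP slice0.
have slice0E e : (e < k.+1)%N -> count (fun u => P (e :: u)) (compositions m (k - e)) = 0%N.
  by move=> ek; apply/eqP; have := slice0 e; rewrite mem_index_iota ek; apply.
have last0 : count (fun u => P (k.+1 :: u)) (compositions m 0) = 0%N.
  have := slice0E k (ltnSn k); rewrite subnn => slice_k0.
  apply/eqP; rewrite -leqn0 -[leqRHS]slice_k0.
  by apply: sub_count => u /=; apply: down_closed_head.
rewrite big_nat_recr //= subnn last0 addn0 big_nat_cond big1 // => e /andP[/andP[_ ek] _].
rewrite subSn; last by lia.
by apply: IH; [apply: down_closed_cons | apply: slice0E; lia].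
Qed.

(* Compositions of [k] into [n] parts are the exponents of the monomials of
   degree [k] in [n] variables, and a [down_closed] predicate is an order ideal
   of monomials: this is Macaulay's bound when the ideal has at most [k]
   members in degree [k]. *)
Lemma count_compositions_succ_le n P k : down_closed P -> (0 < k)%N ->
  (count P (compositions n k) <= k)%N ->
  (count P (compositions n k.+1) <= count P (compositions n k))%N.
Proof.
elim: n P k => [//|m IH] P k P_dc k0; rewrite !count_compositionsS => sum_k.
apply: sum_slices_le => // e.
- case/andP; case: e => // e _ ek; rewrite subSS.
  by apply: sub_count => u /=; apply: down_closed_head.
- move=> ek slice_small; rewrite subSn; last by lia.
  by apply: IH; [apply: down_closed_cons | lia | done].
- move=> ek slice0; rewrite subSn; last by lia.
  by apply: count_compositions_eq0S => //; apply: down_closed_cons.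
Qed.

Section MonomialsAsSequences.
Variable n : nat.

Definition mnm_of_seq (s : seq nat) : 'X_{1..n} := [multinom nth 0%N s i | i < n].

Lemma mnm_of_seqE s i : mnm_of_seq s i = nth 0%N s i.
Proof. by rewrite mnmE. Qed.

Lemma mdeg_mnm_of_seq s : size s = n -> mdeg (mnm_of_seq s) = sumn s.
Proof.
move=> sn; rewrite mdegE sumnE (big_nth 0%N) sn big_mkord.
by apply: eq_bigr => i _; rewrite mnm_of_seqE.
Qed.

Lemma mnm_of_seq_inj s s' : size s = n -> size s' = n ->
  mnm_of_seq s = mnm_of_seq s' -> s = s'.
Proof.
move=> sn s'n /mnmP ss'; apply: (@eq_from_nth _ 0%N); rewrite ?sn ?s'n // => i ilt.
by have := ss' (Ordinal ilt); rewrite !mnm_of_seqE.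
Qed.

Lemma mnm_of_seq_compositions (x : 'X_{1..n}) :
  exists2 s, s \in compositions n (mdeg x) & mnm_of_seq s = x.
Proof.
have sx : mnm_of_seq [seq x i | i <- enum 'I_n] = x.
  by apply/mnmP => i; rewrite mnm_of_seqE (nth_map i) ?nth_ord_enum // size_enum_ord.
have size_sx : size [seq x i | i <- enum 'I_n] = n by rewrite size_map size_enum_ord.
exists [seq x i | i <- enum 'I_n] => //.
by rewrite mem_compositions size_sx -{2}sx mdeg_mnm_of_seq ?eqxx.
Qed.

Lemma mnm_of_seq_decr s (i : 'I_n) : (0 < nth 0%N s i)%N ->
  mnm_of_seq s = (U_(i) + mnm_of_seq (decr_nth s i))%MM.
Proof.
move=> si; apply/mnmP => j; rewrite mnmDE mnm1E !mnm_of_seqE nth_set_nth /=.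
case: (eqVneq i j) => [<-|ij]; first by rewrite eqxx /=; lia.
by rewrite add0n; case: eqP => // /val_inj ji; rewrite ji eqxx in ij.
Qed.

Lemma mnm_of_seq_decr_out s i : (n <= i)%N -> mnm_of_seq (decr_nth s i) = mnm_of_seq s.
Proof.
move=> ni; apply/mnmP => j; rewrite !mnm_of_seqE nth_set_nth /=.
by case: eqP => // ji; have := ltn_ord j; lia.
Qed.
End MonomialsAsSequences.

Section HilbertFunctionGrowth.
Variable K : closedFieldType.
Local Notation R := {mpoly K[4]}.
Variable I : R -> Prop.
Hypothesis homogI : is_homogeneous_ideal I.

Definition standard_seq (s : seq nat) : bool :=
  if ClassicalDescription.excluded_middle_informative (standard_mon I (mnm_of_seq 4 s))
  then true else false.

Lemma standard_seqP s : reflect (standard_mon I (mnm_of_seq 4 s)) (standard_seq s).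
Proof.
by rewrite /standard_seq; case: ClassicalDescription.excluded_middle_informative; constructor.
Qed.

Lemma standard_seq_down_closed : down_closed standard_seq.
Proof.
move=> s i /standard_seqP std_s si; apply/standard_seqP.
case: (ltnP i 4) => [i4 | /mnm_of_seq_decr_out-> //].
by move: std_s; rewrite (mnm_of_seq_decr (i := Ordinal i4) si); apply: (standard_mon_dvd homogI.1).
Qed.

Definition standard_of_deg d := [seq mnm_of_seq 4 s | s <- compositions 4 d & standard_seq s].

Lemma standard_of_deg_uniq d : uniq (standard_of_deg d).
Proof.
rewrite map_inj_in_uniq ?filter_uniq ?compositions_uniq // => s s'.
rewrite !mem_filter !mem_compositions => /and3P[_ /eqP sn _] /and3P[_ /eqP s'n _].
exact: mnm_of_seq_inj.
Qed.

Lemma size_standard_of_deg d : size (standard_of_deg d) = count standard_seq (compositions 4 d).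
Proof. by rewrite size_map size_filter. Qed.

Lemma mem_standard_of_deg d x :
  x \in standard_of_deg d <-> mdeg x = d /\ standard_mon I x.
Proof.
split=> [/mapP[s] | [dx std_x]].
  rewrite mem_filter mem_compositions => /and3P[/standard_seqP std_s /eqP sn /eqP sd] ->.
  by rewrite mdeg_mnm_of_seq.
have [s sd sx] := mnm_of_seq_compositions x.
by rewrite -sx; apply: map_f; rewrite mem_filter -dx sd andbT; apply/standard_seqP; rewrite sx.
Qed.

Lemma hilb_val_succ_le d a b : (0 < d)%N -> (a <= d)%N ->
  hilb_val I d a -> hilb_val I d.+1 b -> (b <= a)%N.
Proof.
move=> d0 ad [s [_ _ s_span]] [t [t_homog t_indep _]].
have [idealI homog_parts] := homogI.
have std_le_a : (count standard_seq (compositions 4 d) <= a)%N.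
  rewrite -size_standard_of_deg.
  apply: (indep_mod_leq_span idealI (s := s) (t := fun k => 'X_[nth 0%MM (standard_of_deg d) k])).
    move=> k; apply: s_span; rewrite dhomogX; apply/eqP.
    by have /mem_standard_of_deg[] := mem_nth 0%MM (ltn_ord k).
  apply: standard_mon_indep => // [|x /mem_standard_of_deg[] //].
  exact: standard_of_deg_uniq.
have std_growth := count_compositions_succ_le standard_seq_down_closed d0 (leq_trans std_le_a ad).
suff : (b <= count standard_seq (compositions 4 d.+1))%N by lia.
rewrite -size_standard_of_deg; apply: (indep_mod_leq_span idealI _ t_indep) => k.
apply: standard_mon_span => //; first exact: standard_of_deg_uniq.
by move=> x dx std_x; apply/mem_standard_of_deg.
Qed.
End HilbertFunctionGrowth.

Section Divisibility.
Variable n : nat.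
Implicit Types u m : 'X_{1..n}.

Lemma mdeg_lepm u m : (u <= m)%MM -> (mdeg u <= mdeg m)%N.
Proof. by move/lem_leo/lemc_mdeg. Qed.

Lemma lepm_mdeg_eq u m : (u <= m)%MM -> mdeg u = mdeg m -> u = m.
Proof.
move=> um; rewrite -{1}(submK um) mdegD -[LHS]add0n => /addIn/esym/eqP.
by rewrite mdeg_eq0 => /eqP mu0; rewrite -(submK um) mu0 add0m.
Qed.

Lemma mdeg_proper_lepm u m : (u <= m)%MM -> u != m -> (mdeg u < mdeg m)%N.
Proof.
move=> um; apply: contraNT; rewrite -leqNgt => mu.
by rewrite (lepm_mdeg_eq um) //; apply/eqP; rewrite eqn_leq mu mdeg_lepm.
Qed.
End Divisibility.

Section ConnectedSum.
Variable K : closedFieldType.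
Local Notation R := {mpoly K[4]}.

Definition proper_divisor2 (m1 m2 m : 'X_{1..4}) : bool :=
  ((m <= m1)%MM && (m != m1)) || ((m <= m2)%MM && (m != m2)).

(* The annihilator of the dual form X^[m1] + X^[m2] under contraction. *)
Definition ann2 (m1 m2 : 'X_{1..4}) (p : R) : Prop :=
  (forall m, proper_divisor2 m1 m2 m -> p@_m = 0) /\ p@_m1 + p@_m2 = 0.

Lemma ann2C m1 m2 p : ann2 m1 m2 p -> ann2 m2 m1 p.
Proof.
by case=> vanish sum0; split=> [m|]; [rewrite /proper_divisor2 orbC; apply: vanish | rewrite addrC].
Qed.

Variables m1 m2 : 'X_{1..4}.

Lemma proper_divisor2_sub mA m u : (mA == m1) || (mA == m2) ->
  (m <= mA)%MM -> (u <= m)%MM -> u != 0%MM -> proper_divisor2 m1 m2 (m - u).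
Proof.
move=> mA12 m_mA u_m u0; have mu_mA := lepm_trans (lem_subr m u) m_mA.
have mu_lt : (mdeg (m - u) < mdeg mA)%N.
  have u_pos : (0 < mdeg u)%N by rewrite lt0n mdeg_eq0.
  have := mdeg_lepm m_mA; move: (submK u_m) => /(congr1 mdeg); rewrite mdegD; lia.
have mu_neq : (m - u)%MM != mA by apply: contraTneq mu_lt => ->; rewrite ltnn.
by case/orP: mA12 => /eqP eA; rewrite /proper_divisor2 -eA mu_mA mu_neq ?orbT.
Qed.

Lemma ann2_mulX u p : ann2 m1 m2 p -> ann2 m1 m2 ('X_[u] * p).
Proof.
case: (eqVneq u 0%MM) => [->|u0]; first by rewrite mpolyX0 mul1r.
case=> vanish _; have coef0 mA m : (mA == m1) || (mA == m2) -> (m <= mA)%MM ->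
    ('X_[u] * p)@_m = 0.
  move=> mA12 m_mA; rewrite mcoeffXM; case: ifP => // u_m.
  exact/vanish/(proper_divisor2_sub mA12).
split; last by rewrite (coef0 m1 m1) ?(coef0 m2 m2) ?lepm_refl ?eqxx ?orbT ?addr0.
by move=> m /orP[] /andP[m_mA _]; [apply: (coef0 m1) | apply: (coef0 m2)]; rewrite ?eqxx ?orbT.
Qed.

Hypothesis disjoint_m12 : forall v, m1 v = 0%N \/ m2 v = 0%N.

(* Multiplying by a variable missing from the proper divisor [m] of [m1]
   moves its coefficient to a monomial which is either again a proper divisor
   of [m1], or [m1] itself, whose partner [m2] cannot be reached. *)
Lemma socle_coef_proper f : (forall v : 'I_4, ann2 m1 m2 ('X_v * f)) ->
  forall m, (m <= m1)%MM -> m != m1 -> f@_m = 0.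
Proof.
move=> socle_f m m_m1 m_neq.
have [v mv] : exists v, (m v < m1 v)%N.
  apply: NNPP => none; case/eqP: m_neq; apply: lepm_mdeg_eq => //.
  apply/eqP; rewrite eqn_leq mdeg_lepm //= mdeg_lepm //; apply/mnm_lepP => v.
  by rewrite leqNgt; apply/negP => ?; apply: none; exists v.
set m' := (U_(v) + m)%MM.
have coef_m' : ('X_v * f)@_m' = f@_m by rewrite /m' mcoeffXM lem_addr addmC addmK.
have m'_m1 : (m' <= m1)%MM.
  apply/mnm_lepP => w; rewrite mnmDE mnm1E.
  by case: (eqVneq v w) => [<- //|_]; rewrite add0n; apply/mnm_lepP.
case: (eqVneq m' m1) => [m'E | m'_neq]; last first.
  by rewrite -coef_m'; apply: (socle_f v).1; rewrite /proper_divisor2 m'_m1 m'_neq.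
have coef_m2 : ('X_v * f)@_m2 = 0.
  rewrite mcoeffXM; case: ifP => // /mnm_lepP/(_ v); rewrite mnm1E eqxx /= => m2v.
  by case: (disjoint_m12 v) => v0; rewrite v0 ?ltn0 in mv m2v.
by have := (socle_f v).2; rewrite coef_m2 addr0 -m'E coef_m'.
Qed.

Variable j : nat.
Hypotheses (deg_m1 : mdeg m1 = j) (deg_m2 : mdeg m2 = j).

Lemma mdeg_proper_divisor2 m : proper_divisor2 m1 m2 m -> (mdeg m < j)%N.
Proof. by case/orP=> /andP[]; [rewrite -deg_m1 | rewrite -deg_m2]; apply: mdeg_proper_lepm. Qed.

Lemma ann2_homogeneous : is_homogeneous_ideal (ann2 m1 m2).
Proof.
have ann2D p q : ann2 m1 m2 p -> ann2 m1 m2 q -> ann2 m1 m2 (p + q).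
  move=> [vp sp] [vq sq]; split=> [m pm|]; first by rewrite mcoeffD vp ?vq ?addr0.
  by rewrite !mcoeffD addrACA sp sq addr0.
have ann2Z c p : ann2 m1 m2 p -> ann2 m1 m2 (c *: p).
  move=> [vp sp]; split=> [m pm|]; first by rewrite mcoeffZ vp ?mulr0.
  by rewrite !mcoeffZ -mulrDr sp mulr0.
have ann2_0 : ann2 m1 m2 0 by split=> [m _|]; rewrite !mcoeff0 ?addr0.
split; first split=> // r p ann_p.
  rewrite (mpolyE r) mulr_suml; apply: (big_ind (ann2 m1 m2)) => // u _.
  by rewrite -scalerAl; apply/ann2Z/ann2_mulX.
move=> p d [vp sp]; split=> [m pm|]; first by rewrite mcoeff_pihomog vp ?if_same.
by rewrite !mcoeff_pihomog deg_m1 deg_m2; case: eqP; rewrite ?addr0.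
Qed.

Lemma hilb_val_ann2 i (L : seq 'X_{1..4}) : i != j -> uniq L ->
  (forall m, (m \in L) = proper_divisor2 m1 m2 m && (mdeg m == i)) ->
  hilb_val (ann2 m1 m2) i (size L).
Proof.
move=> ij L_uniq memL; exists (fun k => 'X_[nth 0%MM L k]).
have L_props (k : 'I_(size L)) :
    proper_divisor2 m1 m2 (nth 0%MM L k) && (mdeg (nth 0%MM L k) == i).
  by rewrite -memL mem_nth.
split=> [k | c [vanish _] k | p p_homog]; first by rewrite dhomogX; case/andP: (L_props k).
  by have := vanish _ (proj1 (andP (L_props k))); rewrite mcoeff_sumX_nth.
exists (fun k => p@_(nth 0%MM L k)); split=> [m m_proper|].
  rewrite mcoeffB; case: (boolP (mdeg m == i)) => mi.
    by rewrite (mcoeff_sumX_mem (fun x => p@_x)) ?subrr // memL m_proper mi.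
  rewrite mcoeff_sumX_notin ?subr0; last by rewrite memL (negbTE mi) andbF.
  exact: (dhomog_nemf_coeff p_homog).
have top0 mA : mdeg mA = j ->
    (p - \sum_(k < size L) p@_(nth 0%MM L k) *: 'X_[nth 0%MM L k])@_mA = 0.
  move=> dA; rewrite mcoeffB mcoeff_sumX_notin; last by rewrite memL dA eq_sym (negbTE ij) andbF.
  by rewrite subr0; apply: (dhomog_nemf_coeff p_homog); change (mdeg mA != i); rewrite dA eq_sym.
by rewrite !top0 ?addr0.
Qed.

Lemma hilb_val_ann2_high i : (j < i)%N -> hilb_val (ann2 m1 m2) i 0.
Proof.
move=> ji; exists (fun=> 0); split=> [[] // | c _ [] // | p p_homog].
have coef0 m : (mdeg m <= j)%N -> p@_m = 0.
  by move=> mj; apply: (dhomog_nemf_coeff p_homog); change (mdeg m != i); rewrite neq_ltn; lia.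
exists (fun=> 0); rewrite big_ord0 subr0.
split=> [m /mdeg_proper_divisor2 mj|]; first by apply: coef0; lia.
by rewrite !coef0 ?deg_m1 ?deg_m2 ?addr0.
Qed.

Hypothesis m12 : m1 != m2.

Lemma hilb_val_ann2_top : hilb_val (ann2 m1 m2) j 1.
Proof.
have m12F : (m1 == m2) = false by apply/negbTE.
exists (fun=> 'X_[m1]); split=> [_ | c [_] | p p_homog]; first by rewrite dhomogX; apply/eqP.
  by rewrite big_ord1 !mcoeffZ !mcoeffX eqxx m12F mulr1 mulr0 addr0 => c0 k; rewrite ord1.
exists (fun=> p@_m1 + p@_m2); split=> [m m_proper|].
  have m1mF : (m1 == m) = false.
    by apply: contraTF (mdeg_proper_divisor2 m_proper) => /eqP <-; rewrite deg_m1 ltnn.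
  rewrite big_ord1 mcoeffB mcoeffZ mcoeffX m1mF mulr0 subr0.
  apply: (dhomog_nemf_coeff p_homog); change (mdeg m != j).
  by rewrite neq_ltn mdeg_proper_divisor2.
by rewrite big_ord1 !mcoeffB !mcoeffZ !mcoeffX eqxx m12F mulr1 mulr0 subr0; ring.
Qed.
End ConnectedSum.

Lemma gorenstein_ann2 (K : closedFieldType) (m1 m2 : 'X_{1..4}) j :
  m1 != m2 -> mdeg m1 = j -> mdeg m2 = j -> (forall v, m1 v = 0%N \/ m2 v = 0%N) ->
  gorenstein_quot (ann2 (K := K) m1 m2).
Proof.
move=> m12 deg_m1 deg_m2 disjoint_m12.
have m12F : (m1 == m2) = false by apply/negbTE.
have vm1_neq v mA : mdeg mA = j -> ((U_(v) + m1)%MM == mA) = false.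
  by move=> deg_mA; apply/negbTE/eqP => /(congr1 mdeg); rewrite mdegD mdeg1 deg_m1 deg_mA; lia.
exists 'X_[m1]; split.
- by case=> _; rewrite !mcoeffX eqxx m12F addr0; apply/eqP/oner_neq0.
- move=> v; rewrite -mpolyXD; split=> [m m_proper|]; last first.
    by rewrite !mcoeffX !vm1_neq ?addr0.
  rewrite mcoeffX; case: eqP => // vm1m; have := mdeg_proper_divisor2 deg_m1 deg_m2 m_proper.
  by rewrite -vm1m mdegD mdeg1 deg_m1; lia.
move=> f socle_f.
have coef0 m : proper_divisor2 m1 m2 m -> f@_m = 0.
  case/orP=> /andP[m_mA m_neq]; first exact: (socle_coef_proper disjoint_m12).
  apply: (socle_coef_proper (m1 := m2) (m2 := m1)) => // [v|v].
    by case: (disjoint_m12 v); [right | left].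
  exact: ann2C.
exists (f@_m1 + f@_m2); split=> [m m_proper|].
  rewrite mcoeffB mcoeffZ mcoeffX coef0 //.
  suff -> : (m1 == m) = false by rewrite mulr0 subr0.
  by apply: contraTF (mdeg_proper_divisor2 deg_m1 deg_m2 m_proper) => /eqP <-; rewrite deg_m1 ltnn.
by rewrite !mcoeffB !mcoeffZ !mcoeffX eqxx m12F mulr1 mulr0 subr0; ring.
Qed.

Definition mnm4 (a b c d : nat) : 'X_{1..4} := mnm_of_seq 4 [:: a; b; c; d].

Lemma mnm4E a b c d (i : 'I_4) : mnm4 a b c d i = nth 0%N [:: a; b; c; d] i.
Proof. exact: mnm_of_seqE. Qed.

Lemma mnm4_eta (m : 'X_{1..4}) : m = mnm4 (m 0%R) (m 1%R) (m 2%R) (m 3%R).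
Proof. by apply/mnmP => -[[|[|[|[|i]]]] i4]; rewrite mnm4E //=; congr (m _); apply: val_inj. Qed.

Lemma lepm_mnm4 a b c d a' b' c' d' :
  (mnm4 a b c d <= mnm4 a' b' c' d')%MM = [&& a <= a', b <= b', c <= c' & d <= d']%N.
Proof.
apply/mnm_lepP/and4P => [le | [? ? ? ?] [[|[|[|[|i]]]] i4]]; rewrite ?mnm4E //.
by have := le 0%R; have := le 1%R; have := le 2%R; have := le 3%R; rewrite !mnm4E.
Qed.

Lemma eq_mnm4 a b c d a' b' c' d' :
  (mnm4 a b c d == mnm4 a' b' c' d') = [&& a == a', b == b', c == c' & d == d']%N.
Proof.
apply/eqP/and4P => [abcd | [/eqP-> /eqP-> /eqP-> /eqP->] //].
have := mnm_of_seq_inj (s := [:: a; b; c; d]) (s' := [:: a'; b'; c'; d']) erefl erefl abcd.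
by case=> -> -> -> ->.
Qed.

Lemma mdeg_mnm4 a b c d : mdeg (mnm4 a b c d) = (a + b + c + d)%N.
Proof. by rewrite mdeg_mnm_of_seq //= addn0 !addnA. Qed.

Section TwoMonomials.
Variables (j p q : nat).
Hypotheses (j6 : (6 <= j)%N) (p12 : (1 <= p <= 2)%N) (q12 : (1 <= q <= 2)%N).

Let m1 := mnm4 (j - p) p 0 0.
Let m2 := mnm4 0 0 (j - q) q.

Lemma two_monomials_props :
  [/\ m1 != m2, mdeg m1 = j, mdeg m2 = j & forall v, m1 v = 0%N \/ m2 v = 0%N].
Proof.
split; rewrite ?eq_mnm4 ?mdeg_mnm4; try lia.
by move=> v; rewrite !mnm4E; case: v => [[|[|[|[|v]]]] //= _]; by [right | left].
Qed.

Definition proper_divisors_of_deg i :=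
  [seq mnm4 (i - t) t 0 0 | t <- iota (i - (j - p)) (minn p i - (i - (j - p))).+1] ++
  [seq mnm4 0 0 (i - t) t | t <- iota (i - (j - q)) (minn q i - (i - (j - q))).+1].

Lemma mem_proper_divisors_of_deg i m : (0 < i < j)%N ->
  (m \in proper_divisors_of_deg i) = proper_divisor2 m1 m2 m && (mdeg m == i).
Proof.
move=> i0j; rewrite [m]mnm4_eta /proper_divisor2 /m1 /m2 !lepm_mnm4 !eq_mnm4 mdeg_mnm4 mem_cat.
set a := m 0%R; set b := m 1%R; set c := m 2%R; set d := m 3%R.
apply/orP/idP => [[] /mapP[t] | abcd].
- by rewrite mem_iota => t_range /eqP; rewrite eq_mnm4; lia.
- by rewrite mem_iota => t_range /eqP; rewrite eq_mnm4; lia.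
have [cd0 | ab0] : (c == 0%N) && (d == 0%N) \/ (a == 0%N) && (b == 0%N) by lia.
- by left; apply/mapP; exists b; [rewrite mem_iota | apply/eqP; rewrite eq_mnm4]; lia.
- by right; apply/mapP; exists d; [rewrite mem_iota | apply/eqP; rewrite eq_mnm4]; lia.
Qed.

Lemma proper_divisors_of_deg_uniq i : (0 < i < j)%N -> uniq (proper_divisors_of_deg i).
Proof.
move=> i0j; rewrite cat_uniq !map_inj_uniq ?iota_uniq ?andbT => [|t t' /eqP|t t' /eqP];
  rewrite ?eq_mnm4; try lia.
by apply/hasPn => _ /mapP[t _ ->]; apply/mapP => -[t' _ /eqP]; rewrite eq_mnm4; lia.
Qed.

Lemma size_proper_divisors_of_deg i :
  size (proper_divisors_of_deg i) =
  ((minn p i - (i - (j - p))).+1 + (minn q i - (i - (j - q))).+1)%N.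
Proof. by rewrite size_cat !size_map !size_iota. Qed.
End TwoMonomials.

(* For a = p + q + 2 with p, q in {1, 2}, take F = w^(j-p) x^p + y^(j-q) z^q. *)
Lemma gorenstein_sequence_Hseq (K : closedFieldType) j a :
  (6 <= j)%N -> (4 <= a <= 6)%N -> gorenstein_sequence K (Hseq j a) j.
Proof.
move=> j6 a46; pose p := if a == 4%N then 1%N else 2%N; pose q := if a == 6%N then 2%N else 1%N.
have p12 : (1 <= p <= 2)%N by rewrite /p; case: ifP.
have q12 : (1 <= q <= 2)%N by rewrite /q; case: ifP.
have a_pq : a = (p + q + 2)%N by rewrite /p /q; do 2 case: eqP; lia.
have [m12 deg_m1 deg_m2 disjoint_m12] := two_monomials_props j6 p12 q12.
have Hj : Hseq j a j = 1%N by rewrite /Hseq; do 3 (case: eqP => [?|_]; first by lia); rewrite eqxx.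
exists (ann2 (mnm4 (j - p) p 0 0) (mnm4 0 0 (j - q) q)); split.
- exact: ann2_homogeneous deg_m1 deg_m2.
- exact: gorenstein_ann2 m12 deg_m1 deg_m2 disjoint_m12.
- move=> [_|i]; last rewrite leq_eqVlt => /orP[/eqP-> | i_j].
  + apply: (hilb_val_ann2 _ deg_m1 deg_m2 (L := [:: 0%MM])) => // [|m]; first lia.
    have -> : 0%MM = mnm4 0 0 0 0 by apply/mnmP => i; rewrite mnm4E mnm0E; case: i => -[|[|[|[|]]]].
    by rewrite [m]mnm4_eta mem_seq1 /proper_divisor2 !lepm_mnm4 !eq_mnm4 mdeg_mnm4; lia.
  + by rewrite Hj; apply: hilb_val_ann2_top.
  have -> : Hseq j a i.+1 = size (proper_divisors_of_deg j p q i.+1).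
    rewrite size_proper_divisors_of_deg /Hseq.
    by do 4 (case: eqP => [?|?]; first by lia); rewrite i_j; lia.
  apply: (hilb_val_ann2 _ deg_m1 deg_m2); first by lia.
    by apply: proper_divisors_of_deg_uniq; lia.
  by move=> m; apply: mem_proper_divisors_of_deg; lia.
- by rewrite Hj.
- by move=> i; apply: hilb_val_ann2_high.
Qed.

Lemma gorenstein_sequence_Hseq_ge4 (K : closedFieldType) j a :
  (6 <= j)%N -> gorenstein_sequence K (Hseq j a) j -> (4 <= a)%N.
Proof.
move=> j6 [I [homogI _ hilbI _ _]]; case: (leqP 4 a) => // a3.
have hilba := hilbI (j - 2)%N (leq_subr _ _); rewrite Hseq_middle in hilba; last by lia.
have j2j : ((j - 2).+1 <= j)%N by lia.
have := hilbI _ j2j; rewrite /Hseq; do 2 (case: eqP => [?|_]; first by lia).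
case: eqP => [_ hilb4|?]; last by lia.
by have := hilb_val_succ_le homogI (_ : 0 < j - 2)%N (_ : a <= j - 2)%N hilba hilb4; lia.
Qed.

Theorem proposition4p4 (K : closedFieldType) (j a : nat) :
  (6 <= j)%N -> (a <= 6)%N ->
  [/\ (gorenstein_sequence K (Hseq j a) j <-> O_sequence (DeltaH_half (Hseq j a) j)),
      (O_sequence (DeltaH_half (Hseq j a) j) <->
         noninc_after_first_failure (DeltaH_half (Hseq j a) j)) &
      (gorenstein_sequence K (Hseq j a) j -> a <> 2%N /\ a <> 3%N)].
Proof.
move=> j6 a6; have gor_a4 : gorenstein_sequence K (Hseq j a) j <-> (4 <= a)%N.
  split; first exact: gorenstein_sequence_Hseq_ge4.
  by move=> a4; apply: gorenstein_sequence_Hseq => //; rewrite a4.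
have a4_int : 0 <= a%:Z - 4 <-> (4 <= a)%N by rewrite subr_ge0 lez_nat.
have n0 : (0 < j./2 - 2)%N by have := half_bounds j6; lia.
have O_a4 : O_sequence (DeltaH_half (Hseq j a) j) <-> (4 <= a)%N.
  by rewrite DeltaH_half_Hseq // -a4_int; apply: O_sequence_1_3; lia.
have N_a4 : noninc_after_first_failure (DeltaH_half (Hseq j a) j) <-> (4 <= a)%N.
  by rewrite DeltaH_half_Hseq // -a4_int; apply: noninc_after_first_failure_1_3.
split; first exact: iff_trans gor_a4 (iff_sym O_a4).
  exact: iff_trans O_a4 (iff_sym N_a4).
by move/gor_a4; lia.
Qed.
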